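(* Let $\phi:\Delta\to\mathbb R$ be continuous. Then the function $g:\Delta\to\mathbb R$ given by $g(x)=\max_{y\in\Delta,\,y\trianglerighteq x}\phi(y)$ is continuous.
   Context: Fix $\theta\in\{2,3,\dots\}$. $\Delta=\{x\in[0,1]^\theta:x_1\ge\dots\ge x_\theta,\ \sum_i x_i=1\}$. For $x,y\in\Delta$, $y\trianglerighteq x$ means $y_1+\dots+y_i\ge x_1+\dots+x_i$ for all $i$. *)

From HB Require Import structures.
From mathcomp Require Import all_boot all_order all_algebra.
From mathcomp Require Import all_classical all_reals all_analysis.
Unset Printing Implicit Defensive.
Import Order.TTheory GRing.Theory Num.Theory.
Import numFieldNormedType.Exports.
Local Open Scope classical_set_scope.
Local Open Scope ring_scope.

(* The simplex of nonincreasing probability vectors in R^theta,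
   coordinates indexed by 'I_theta (x_1,...,x_theta = x 0 ... x (theta-1)). *)
Definition Delta (R : realType) (theta : nat) : set 'rV[R]_theta :=
  [set x | (forall i : 'I_theta, 0 <= x ord0 i <= 1) /\
           (forall i j : 'I_theta, (i <= j)%N -> x ord0 j <= x ord0 i) /\
           \sum_(i < theta) x ord0 i = 1].

Definition majorizes {R : realType} {theta : nat} (y x : 'rV[R]_theta) : Prop :=
  forall k : 'I_theta,
    \sum_(i < theta | (i <= k)%N) x ord0 i <= \sum_(i < theta | (i <= k)%N) y ord0 i.

(* Lower semicontinuity: a maximizer y for x, pushed slightly towards the
   vertex e1 = (1, 0, ..., 0), majorizes every point of Delta near x while
   phi barely changes.  Upper semicontinuity is the maximum theorem: Delta is
   compact and majorization is a closed relation, so maximizers for points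
   converging to x cluster at a point of Delta that majorizes x. *)

From HB Require Import structures.
From mathcomp Require Import all_boot all_order all_algebra.
From mathcomp Require Import all_classical all_reals all_analysis.
From mathcomp Require Import ring lra.
Import Order.TTheory GRing.Theory Num.Theory.
Import numFieldNormedType.Exports.
Local Open Scope classical_set_scope.
Local Open Scope ring_scope.

Section ClosedInequalities.
Context {T : topologicalType} {R : realType}.

Lemma closed_fun_le (f h : T -> R) :
  continuous f -> continuous h -> closed [set x | f x <= h x].
Proof.
move=> cf ch; have -> : [set x | f x <= h x] = (h \- f) @^-1` [set r | 0 <= r].
  by apply/seteqP; split=> x /=; rewrite subr_ge0.
apply: preimage_closed; last exact: closed_ge.
move=> x _; apply: cvgB; [exact: ch | exact: cf].
Qed.

Lemma closure_fun_le {A : set T} {f h : T -> R} :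
  continuous f -> continuous h -> (forall x, A x -> f x <= h x) ->
  forall p, closure A p -> f p <= h p.
Proof. by move=> cf ch Afh p /(closureS Afh); apply: closed_fun_le. Qed.

Lemma closure_ge_within {D A : set T} {f : T -> R} {c : R} {p : T} :
  A `<=` D -> f @ within D (nbhs p) --> f p -> closure A p ->
  (forall z, A z -> c <= f z) -> c <= f p.
Proof.
move=> AD fp Ap cAf; have PF := within_nbhs_proper Ap.
apply: (@closed_cvg _ _ _ PF f _ (@closed_ge _ c)).
  exact: filterS cAf (withinT A (nbhs_filter p)).
by apply: cvg_trans fp; exact: cvg_app (within_subset _ AD).
Qed.

End ClosedInequalities.

Section MaximumUpperSemicontinuity.
Context {T U : topologicalType} {R : realType}.
Context {D : set T} {K : set U} {M : set (U * T)} {phi : U -> R} {g : T -> R}.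
Hypotheses (K_compact : compact K) (M_closed : closed M).
Hypothesis phi_cont : {within K, continuous phi}.
Hypothesis g_max : forall x, D x ->
  (exists2 y, K y /\ M (y, x) & g x = phi y) /\
  (forall y, K y -> M (y, x) -> phi y <= g x).

Lemma max_upper_semicontinuous x c : D x -> g x < c ->
  \forall x' \near within D (nbhs x), g x' < c.
Proof.
move=> Dx gxc.
have [//|not_near] := pselect (\forall x' \near within D (nbhs x), g x' < c).
exfalso.
pose B V := [set y | exists2 x', V x' /\ D x' & [/\ K y, M (y, x') & c <= phi y]].
have F_proper : ProperFilter (filter_from (nbhs x) B).
  apply: filter_from_proper.
    apply: filter_from_filter; first by exists setT; exact: filterT.
    move=> V W Vx Wx; exists (V `&` W); first exact: filterI.
    by move=> y [x' [[Vx' Wx'] Dx'] yB]; split; exists x'.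
  move=> V Vx; apply: contrapT => noB; apply: not_near.
  apply: filterS Vx => x' Vx' Dx'; rewrite ltNge; apply/negP => cgx'.
  have [[y [Ky Myx'] gx'] _] := g_max _ Dx'.
  by apply: noB; exists y, x' => //; split; rewrite -?gx'.
have [y0 [Ky0 y0_cluster]] : K `&` cluster (filter_from (nbhs x) B) !=set0.
  by apply: K_compact; exists setT; [exact: filterT | move=> y [? _ []]].
have y0_cl V : nbhs x V -> closure (B V) y0.
  by move=> Vx; move: y0_cluster; rewrite clusterE; apply; exists V.
have c_le_phiy0 : c <= phi y0.
  have BK : B setT `<=` K by move=> y [? _ []].
  apply: (closure_ge_within BK _ (y0_cl _ filterT)) => [|y [? _ []] //].
  by move/subspace_continuousP : phi_cont; apply.
have My0x : M (y0, x).
  apply: M_closed => W [[P Q] /= [Py0 Qx] PQW].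
  have [z [[x' [Qx' _] [_ Mzx' _]] Pz]] := y0_cl Q Qx P Py0.
  by exists (z, x'); split => //; exact: PQW.
have [_ gx_max] := g_max _ Dx; have := gx_max y0 Ky0 My0x; lra.
Qed.

End MaximumUpperSemicontinuity.

Section Simplex.
Context {R : realType} {theta : nat}.
Implicit Types (u v x y : 'rV[R]_theta) (P : pred 'I_theta).

Definition psum P u := \sum_(i < theta | P i) u ord0 i.

Definition prefix (k : 'I_theta) : pred 'I_theta := fun i => (i <= k)%N.

Lemma psum_continuous P : continuous (psum P).
Proof.
move=> u; apply: (@cvg_big _ _ +%R 0 P add_continuous _ (nbhs u)) => i _.
exact: (@coord_continuous R 1 theta ord0 i u).
Qed.

Lemma psumDZ P a b u v : psum P (a *: u + b *: v) = a * psum P u + b * psum P v.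
Proof.
rewrite /psum; under eq_bigr do rewrite !mxE.
by rewrite big_split /= -!mulr_sumr.
Qed.

Lemma psum_le1 P u : Delta R theta u -> psum P u <= 1.
Proof.
move=> [u01 [_ <-]]; rewrite /psum [leLHS]big_mkcond; apply: ler_sum => i _.
by case: (P i) => //; have /andP[] := u01 i.
Qed.

Lemma majorizes_closed :
  closed [set yx : 'rV[R]_theta * 'rV[R]_theta | majorizes yx.1 yx.2].
Proof.
have -> : [set yx : 'rV[R]_theta * 'rV[R]_theta | majorizes yx.1 yx.2] =
    \bigcap_(k in setT) [set yx | psum (prefix k) yx.2 <= psum (prefix k) yx.1].
  by apply/seteqP; split=> yx /= maj k => [_|]; exact: maj.
apply: closed_bigI => k _; apply: closed_fun_le => yx.
  by apply: continuous_comp; [exact: cvg_snd | exact: psum_continuous].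
by apply: continuous_comp; [exact: cvg_fst | exact: psum_continuous].
Qed.

Lemma mx_norm_le u c : 0 <= c -> (forall i, `|u ord0 i| <= c) -> `|u| <= c.
Proof.
move=> c0 uc; rewrite [leLHS]/Num.norm /= mx_normrE.
by apply: bigmax_le => // -[a i] _ /=; rewrite (ord1 a).
Qed.

Lemma Delta_closed : closed (Delta R theta).
Proof.
have coord i : continuous (fun u : 'rV[R]_theta => u ord0 i).
  exact: coord_continuous.
have cst (a : R) : continuous (fun _ : 'rV[R]_theta => a) by exact: cst_continuous.
move=> p clp; split; [|split].
- move=> i; apply/andP; split.
    by apply: (closure_fun_le (cst 0) (coord i) _ _ clp) => u [/(_ i)/andP[]].
  by apply: (closure_fun_le (coord i) (cst 1) _ _ clp) => u [/(_ i)/andP[]].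
- move=> i j ij; apply: (closure_fun_le (coord j) (coord i) _ _ clp).
  by move=> u [_ [mono _]]; exact: mono.
- apply/eqP; rewrite eq_le; apply/andP; split.
    apply: (closure_fun_le (psum_continuous predT) (cst 1) _ _ clp).
    by move=> u [_ [_ <-]].
  apply: (closure_fun_le (cst 1) (psum_continuous predT) _ _ clp).
  by move=> u [_ [_ <-]].
Qed.

Lemma Delta_compact : compact (Delta R theta).
Proof.
apply: bounded_closed_compact; last exact: Delta_closed.
exists 1; split; first exact: num_real.
move=> c c1 u [u01 _]; apply: mx_norm_le => [|i]; first lra.
by have /andP[u0 u1] := u01 i; rewrite ger0_norm //; lra.
Qed.

Lemma Delta_convex u v t : Delta R theta u -> Delta R theta v -> 0 <= t <= 1 ->
  Delta R theta ((1 - t) *: u + t *: v).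
Proof.
move=> [u01 [u_mono u1]] [v01 [v_mono v1]] /andP[t0 t1]; split; [|split].
- move=> i; rewrite !mxE; have /andP[? ?] := u01 i; have /andP[? ?] := v01 i.
  by apply/andP; split; nra.
- by move=> i j ij; rewrite !mxE; have := u_mono i j ij; have := v_mono i j ij; nra.
- by have := psumDZ predT (1 - t) t u v; rewrite /psum u1 v1 => ->; ring.
Qed.

Definition e1 : 'rV[R]_theta := \row_i (val i == 0%N)%:R.

Section FirstVertex.
Hypothesis theta_gt0 : (0 < theta)%N.

Lemma psum_e1 P : P (Ordinal theta_gt0) -> psum P e1 = 1.
Proof.
move=> P0; rewrite /psum (bigD1 (Ordinal theta_gt0)) //= mxE /=.
rewrite big1 ?addr0 // => i /andP[_ i_ne0]; rewrite mxE.
by case: eqP => // i0; case/eqP: i_ne0; exact: val_inj.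
Qed.

Lemma Delta_e1 : Delta R theta e1.
Proof.
split; [|split].
- by move=> i; rewrite mxE; case: (_ == _); rewrite /= ?ler01 ?lexx.
- move=> i j ij; rewrite !mxE; case: (eqVneq (val j) 0%N) => [j0|_].
    by move: ij; rewrite j0 leqn0 => ->.
  by case: (_ == _).
- exact: psum_e1.
Qed.

(* Pushing y towards e1 raises each partial sum below 1 by a fixed positive
   amount, which absorbs the small change in the partial sums of x'. *)
Lemma majorizes_shift_e1 {x y : 'rV[R]_theta} {t : R} :
  Delta R theta y -> majorizes y x -> 0 < t ->
  \forall x' \near within (Delta R theta) (nbhs x),
    majorizes ((1 - t) *: y + t *: e1) x'.
Proof.
move=> Dy yx t0; set ys := (1 - t) *: y + t *: e1.
suff near_k k : \forall x' \near within (Delta R theta) (nbhs x),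
    psum (prefix k) x' <= psum (prefix k) ys.
  by apply: filterS (filter_forall _ near_k) => x'.
have ys_k : psum (prefix k) ys = psum (prefix k) y + t * (1 - psum (prefix k) y).
  by rewrite psumDZ psum_e1 //; ring.
have := psum_le1 (prefix k) _ Dy; rewrite le_eqVlt => /orP[/eqP y_k1|y_k_lt1].
  apply: filterS (withinT _ (nbhs_filter x)) => x' Dx'.
  by rewrite ys_k y_k1 subrr mulr0 addr0; exact: psum_le1.
have margin : psum (prefix k) x < psum (prefix k) ys.
  by rewrite ys_k; have := yx k; rewrite -/(psum _ x) -/(psum _ y); nra.
apply: filterS (cvgr_lt _ (cvg_within_filter _ (psum_continuous _ x)) _ margin).
by move=> x' /ltW.
Qed.

Context {phi g : 'rV[R]_theta -> R}.
Hypothesis phi_cont : {within Delta R theta, continuous phi}.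
Hypothesis g_max : forall x, Delta R theta x ->
  (exists2 y, (Delta R theta y /\ majorizes y x) & g x = phi y) /\
  (forall y, Delta R theta y -> majorizes y x -> phi y <= g x).

Lemma max_lower_semicontinuous x c : Delta R theta x -> c < g x ->
  \forall x' \near within (Delta R theta) (nbhs x), c < g x'.
Proof.
move=> Dx cgx; have [[y [Dy yx] gxy] _] := g_max _ Dx.
have /nbhs_ballP[r r0 phi_gt] :
    \forall z \near within (Delta R theta) (nbhs y), c < phi z.
  have phi_y : phi z @[z --> within (Delta R theta) (nbhs y)] --> phi y.
    by move/subspace_continuousP : phi_cont; apply.
  by apply: (cvgr_gt _ phi_y); rewrite -gxy.
set d := `|e1 - y|; pose t := Num.min 1 (r / (d + 1)).
have d0 : 0 <= d := normr_ge0 _.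
have t0 : 0 < t by rewrite lt_min ltr01 divr_gt0 //; lra.
have t1 : t <= 1 by rewrite ge_min lexx.
set ys := (1 - t) *: y + t *: e1.
have Dys : Delta R theta ys by apply: Delta_convex => //; [exact: Delta_e1 | lra].
have y_ys : ball y r ys.
  rewrite -ball_normE /ball_ /= (_ : y - ys = t *: (y - e1)); last first.
    by apply/rowP => i; rewrite /ys !mxE; ring.
  rewrite normrZ gtr0_norm // distrC -/d.
  apply: le_lt_trans (_ : r / (d + 1) * d < r).
    by rewrite ler_wpM2r // ge_min lexx orbT.
  by rewrite mulrAC ltr_pdivrMr ?ltr_pM2l //; lra.
apply: (filterS2 _ _ (withinT _ (nbhs_filter x)) (majorizes_shift_e1 Dy yx t0)).
move=> x' Dx' ys_x'; have [_ gx'_max] := g_max _ Dx'.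
exact: lt_le_trans (phi_gt _ y_ys Dys) (gx'_max _ Dys ys_x').
Qed.

End FirstVertex.

End Simplex.

Theorem lemma3p3 (R : realType) (theta : nat) (htheta : (2 <= theta)%N)
  (phi g : 'rV[R]_theta -> R) :
  {within Delta R theta, continuous phi} ->
  (forall x, Delta R theta x ->
     (exists2 y, (Delta R theta y /\ majorizes y x) & g x = phi y) /\
     (forall y, Delta R theta y -> majorizes y x -> phi y <= g x)) ->
  {within Delta R theta, continuous g}.
Proof.
move=> phi_cont g_max; have theta_gt0 : (0 < theta)%N by apply: leq_trans htheta.
apply/subspace_continuousP => x Dx; apply/cvgrPdist_lt => e e0.
have g_lsc := max_lower_semicontinuous theta_gt0 phi_cont g_max x (g x - e) Dx.
have g_usc := max_upper_semicontinuous Delta_compact majorizes_closed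
  phi_cont g_max x (g x + e) Dx.
apply: filterS2 (g_lsc _) (g_usc _) => [x' lo hi||].
- by rewrite ltr_distlC lo hi.
- by rewrite gtrDl oppr_lt0.
- by rewrite ltrDl.
Qed.
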